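(* Let $s\ge5$ be a fixed integer. There exists a unique real number $\rho(s)>2$ such that $L(\rho(s),s)=0$. Moreover, \[ L(r,s)<0 \text{ for } r\in[2,\rho(s)),\qquad L(r,s)>0 \text{ for } r\in(\rho(s),\infty). \] Furthermore, if $s\ge6$, then $\rho(s)>s$.
   Context: For an integer $s\ge2$ and real $r\ge2$ (with $rs-r-s>0$), define \[ L(r,s)=\frac rs\log(s-1)+(r-1)\log(r-1)-\frac{rs-r-s}{s}\log r-\frac{rs-r-s}{s(s-1)}\log(rs-r-s). \] *)

From Stdlib Require Import Reals.
Open Scope R_scope.

Definition L (r : R) (s : nat) : R :=
  let S := INR s in
  r / S * ln (S - 1) + (r - 1) * ln (r - 1)
  - (r * S - r - S) / S * ln r
  - (r * S - r - S) / (S * (S - 1)) * ln (r * S - r - S).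

(* We treat S = s as a real parameter S >= 5 and study Lf S r = L(r,s) for
   r > 3/2, where the argument r S - r - S of the last logarithm is positive.
   - Elementary bounds on ln: ln y <= y - 1, 1 - 1/y <= ln y, and the two-sided
     estimate 2/(2x+1) < ln(1 + 1/x) < (2x+1)/(2x(x+1)) for x > 0.
   - The derivative Df S of Lf S is increasing on (3/2, (S+1)/2] (its own
     derivative has a concave numerator, positive there) and positive on
     [(S+1)/2, oo); hence once Df S is positive it stays positive.
   - Since Lf S 2 < 0, the mean value theorem gives a point in (2, x) with
     positive derivative whenever Lf S x >= 0, so Lf S is strictly increasing
     from x on.  Together with Lf S (exp (S-1)) > 0 and the intermediate value
     theorem this yields the unique sign change (lemma unique_sign_change).
   - For integer s >= 6, Lf S S < 0 follows from ln(S(S-1)) < g S for an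
     explicit rational function g, proved by induction on s. *)

From Stdlib Require Import Reals Lra Psatz.
From Coquelicot Require Import Coquelicot.
Open Scope R_scope.

Lemma deriv_continuity (f : R -> R) (x l : R) :
  is_derive f x l -> continuity_pt f x.
Proof.
  intros H. apply continuity_pt_filterlim.
  exact (ex_derive_continuous f x (ex_intro _ l H)).
Qed.

Lemma mvt_closed (f df : R -> R) (a b : R) : a < b ->
  (forall x, a <= x <= b -> is_derive f x (df x)) ->
  exists c, a <= c <= b /\ f b - f a = df c * (b - a).
Proof.
  intros hab hd.
  destruct (MVT_gen f a b df) as [c [hc e]].
  - intros x hx. apply hd. rewrite Rmin_left, Rmax_right in hx; lra.
  - intros x hx. apply (deriv_continuity f x (df x)), hd.
    rewrite Rmin_left, Rmax_right in hx; lra.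
  - exists c. rewrite Rmin_left, Rmax_right in hc; lra.
Qed.

(* Strict increase from a derivative that is nonnegative on [a, b] and
   positive on (a, b]; this allows the derivative to vanish at a. *)
Lemma incr_of_pos_deriv (f df : R -> R) (a b : R) : a < b ->
  (forall x, a <= x <= b -> is_derive f x (df x)) ->
  (forall x, a <= x <= b -> 0 <= df x) ->
  (forall x, a < x <= b -> 0 < df x) -> f a < f b.
Proof.
  intros hab hd hnn hpos.
  set (m := (a + b) / 2).
  assert (weak : f a <= f m).
  { destruct (mvt_closed f df a m) as [c [hc e]]; [unfold m; lra| |].
    - intros x hx. apply hd. unfold m in hx; lra.
    - assert (0 <= df c) by (apply hnn; unfold m in hc; lra).
      unfold m in *; nra. }
  assert (strict : f m < f b).
  { apply (incr_function_le f m b df); simpl; unfold m; try lra.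
    - intros x hx1 hx2. apply hd; lra.
    - intros x hx1 hx2. apply hpos; lra. }
  lra.
Qed.

Lemma unique_sign_change (f : R -> R) (a b : R) : a < b ->
  (forall x, a <= x <= b -> continuity_pt f x) -> f a < 0 -> 0 < f b ->
  (forall x y, a < x -> x < y -> 0 <= f x -> f x < f y) ->
  exists rho, a < rho /\ f rho = 0 /\
    (forall r, a < r -> f r = 0 -> r = rho) /\
    (forall r, a <= r < rho -> f r < 0) /\
    (forall r, rho < r -> 0 < f r).
Proof.
  intros hab hc ha hb hincr.
  destruct (Ranalysis5.IVT_interv f a b hc hab ha hb) as [rho [hr e]].
  assert (hra : a < rho) by (destruct (Req_dec rho a) as [->|]; lra).
  exists rho. repeat split; [exact hra | exact e | | |].
  - intros r hr' er. destruct (Rtotal_order r rho) as [h|[h|h]]; [|exact h|].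
    + pose proof (hincr r rho hr' h ltac:(lra)). lra.
    + pose proof (hincr rho r hra h ltac:(lra)). lra.
  - intros r [hr1 hr2]. destruct (Rlt_or_le (f r) 0) as [h|h]; [exact h|].
    destruct (Req_dec r a) as [->|hne]; [lra|].
    pose proof (hincr r rho ltac:(lra) hr2 h). lra.
  - intros r hr'. pose proof (hincr rho r hra hr' ltac:(lra)). lra.
Qed.

Lemma ln_le_sub1 (y : R) : 0 < y -> ln y <= y - 1.
Proof.
  intros hy. pose proof (exp_ineq1_le (ln y)) as h. rewrite exp_ln in h; lra.
Qed.

Lemma ln_ge_1_sub_inv (y : R) : 0 < y -> 1 - / y <= ln y.
Proof.
  intros hy. pose proof (ln_le_sub1 (/ y) (Rinv_0_lt_compat _ hy)) as h.
  rewrite ln_Rinv in h; lra.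
Qed.

Lemma ln_gt_pade (y : R) : 1 < y -> 2 * (y - 1) / (y + 1) < ln y.
Proof.
  intros hy.
  set (h := fun z => ln z - 2 * (z - 1) / (z + 1)).
  assert (lt : h 1 < h y).
  { apply (incr_of_pos_deriv h
      (fun z => (z - 1) * (z - 1) / (z * ((z + 1) * (z + 1))))); [lra| | |].
    - intros z hz. unfold h. auto_derive; [lra|]. field. lra.
    - intros z hz. apply Rdiv_le_0_compat; nra.
    - intros z hz. apply Rdiv_lt_0_compat; nra. }
  unfold h in lt. rewrite ln_1 in lt. lra.
Qed.

Lemma ln_lt_half_diff (y : R) : 1 < y -> ln y < (y - / y) / 2.
Proof.
  intros hy.
  set (h := fun z => (z - / z) / 2 - ln z).
  assert (lt : h 1 < h y).
  { apply (incr_of_pos_deriv h (fun z => (z - 1) * (z - 1) / (2 * (z * z))));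
      [lra| | |].
    - intros z hz. unfold h. auto_derive; [lra|]. field. lra.
    - intros z hz. apply Rdiv_le_0_compat; nra.
    - intros z hz. apply Rdiv_lt_0_compat; nra. }
  unfold h in lt. rewrite ln_1 in lt. lra.
Qed.

Lemma ln_succ_ratio_lower (x : R) : 0 < x -> 2 / (2 * x + 1) < ln ((x + 1) / x).
Proof.
  intros hx.
  assert (hy : 1 < (x + 1) / x)
    by (apply (Rmult_lt_reg_r x); [lra|]; field_simplify; lra).
  pose proof (ln_gt_pade _ hy) as h.
  replace (2 * ((x + 1) / x - 1) / ((x + 1) / x + 1)) with (2 / (2 * x + 1)) in h
    by (field; lra).
  exact h.
Qed.

Lemma ln_succ_ratio_upper (x : R) : 0 < x ->
  ln ((x + 1) / x) < (2 * x + 1) / (2 * x * (x + 1)).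
Proof.
  intros hx.
  assert (hy : 1 < (x + 1) / x)
    by (apply (Rmult_lt_reg_r x); [lra|]; field_simplify; lra).
  pose proof (ln_lt_half_diff _ hy) as h.
  replace (((x + 1) / x - / ((x + 1) / x)) / 2)
    with ((2 * x + 1) / (2 * x * (x + 1))) in h by (field; lra).
  exact h.
Qed.

(* A numerical bound: ln 2 = ln (4/3) + ln (3/2) < 7/24 + 5/12. *)
Lemma ln2_lt : ln 2 < 17 / 24.
Proof.
  replace 2 with ((3 + 1) / 3 * ((2 + 1) / 2)) by field.
  rewrite ln_mult by lra.
  pose proof (ln_succ_ratio_upper 3 ltac:(lra)).
  pose proof (ln_succ_ratio_upper 2 ltac:(lra)).
  assert (e3 : (2 * 3 + 1) / (2 * 3 * (3 + 1)) = 7 / 24) by field.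
  assert (e2 : (2 * 2 + 1) / (2 * 2 * (2 + 1)) = 5 / 12) by field.
  lra.
Qed.

(* L as a function of a real parameter S and of r; L r s unfolds to
   Lf (INR s) r, which the final theorem uses by conversion. *)
Definition Lf (S r : R) : R :=
  r / S * ln (S - 1) + (r - 1) * ln (r - 1)
  - (r * S - r - S) / S * ln r - (r * S - r - S) / (S * (S - 1)) * ln (r * S - r - S).

Definition Df (S r : R) : R :=
  ln (r - 1) - ln r + 1 / r + (ln (S - 1) + ln r - ln (r * S - r - S)) / S.

Definition DDf (S r : R) : R :=
  (r * (S - 1) - S - r * r + r) / (r * r * (r - 1) * (r * S - r - S)).

Section LfAnalysis.

Variable S : R.
Hypothesis hS : 5 <= S.

Lemma last_arg_pos (r : R) : 3 / 2 < r -> 0 < r * S - r - S.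
Proof. intros; nra. Qed.

Lemma Lf_deriv (r : R) : 3 / 2 < r -> is_derive (Lf S) r (Df S r).
Proof.
  intros hr. pose proof (last_arg_pos r hr).
  unfold Lf, Df. auto_derive.
  - repeat split; lra.
  - unfold Rminus. field. repeat split; lra.
Qed.

Lemma Df_deriv (r : R) : 3 / 2 < r -> is_derive (Df S) r (DDf S r).
Proof.
  intros hr. pose proof (last_arg_pos r hr).
  unfold DDf, Df. auto_derive.
  - repeat split; lra.
  - unfold Rminus. field. repeat split; lra.
Qed.

(* Lf S rewritten so that each logarithm has an argument close to 1. *)
Lemma Lf_regrouped (r : R) : 3 / 2 < r -> Lf S r =
  (ln (S - 1) + ln r) / (S - 1) + (r - 1) * ln ((r - 1) / r)
  - (r * S - r - S) / (S * (S - 1)) * ln ((r * S - r - S) / ((S - 1) * r)).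
Proof.
  intros hr. pose proof (last_arg_pos r hr).
  rewrite ln_div by lra. rewrite ln_div by nra. rewrite ln_mult by lra.
  unfold Lf. field. lra.
Qed.

(* Lf S is negative at r = 2.  Writing a = ln(S-1) and l = ln 2,
   S(S-1) Lf S 2 <= S a + 1 - (S-1)(S-2) l, and a <= 2 l + (S-5)/4. *)
Lemma Lf_at_2_neg : Lf S 2 < 0.
Proof.
  set (a := ln (S - 1)). set (l := ln 2).
  assert (e : S * (S - 1) * Lf S 2
              = 2 * (S - 1) * a - (S - 2) * (S - 1) * l - (S - 2) * ln (S - 2)).
  { unfold Lf, a, l. replace (2 - 1) with 1 by ring. rewrite ln_1.
    replace (2 * S - 2 - S) with (S - 2) by ring. field. lra. }
  assert (hb : a - 1 / (S - 2) <= ln (S - 2)).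
  { unfold a. replace (S - 1) with ((S - 2) * ((S - 1) / (S - 2))) by (field; lra).
    rewrite ln_mult by (try apply Rdiv_lt_0_compat; lra).
    pose proof (ln_le_sub1 ((S - 1) / (S - 2)) ltac:(apply Rdiv_lt_0_compat; lra)).
    replace ((S - 1) / (S - 2) - 1) with (1 / (S - 2)) in H by (field; lra).
    lra. }
  assert (hb' : (S - 2) * (a - 1 / (S - 2)) <= (S - 2) * ln (S - 2))
    by (apply Rmult_le_compat_l; lra).
  replace ((S - 2) * (a - 1 / (S - 2))) with ((S - 2) * a - 1) in hb' by (field; lra).
  assert (ha : a <= 2 * l + (S - 5) / 4).
  { unfold a, l. replace (S - 1) with (2 * 2 * ((S - 1) / 4)) by field.
    rewrite !ln_mult by lra. pose proof (ln_le_sub1 ((S - 1) / 4)). lra. }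
  assert (hSa : S * a <= S * (2 * l + (S - 5) / 4)) by (apply Rmult_le_compat_l; lra).
  assert (hl : 0 < (l - / 2) * (S * S - 5 * S + 2))
    by (pose proof ln_lt_2; apply Rmult_lt_0_compat; unfold l; nra).
  assert (neg : S * (S - 1) * Lf S 2 < 0) by nra.
  assert (0 < S * (S - 1)) by nra.
  nra.
Qed.

(* Lf S is positive at r = exp (S - 1): in the regrouped form the first term
   exceeds 1, the second is at least -1 and the third is positive. *)
Lemma Lf_large_pos : 0 < Lf S (exp (S - 1)).
Proof.
  set (E := exp (S - 1)).
  assert (hE : S <= E) by (pose proof (exp_ineq1_le (S - 1)); unfold E; lra).
  pose proof (last_arg_pos E ltac:(lra)) as ht.
  rewrite Lf_regrouped by lra. unfold E at 1. rewrite ln_exp. fold E.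
  assert (first : 1 < (ln (S - 1) + (S - 1)) / (S - 1)).
  { assert (0 < ln (S - 1)) by (rewrite <- ln_1; apply ln_increasing; lra).
    replace ((ln (S - 1) + (S - 1)) / (S - 1)) with (ln (S - 1) / (S - 1) + 1)
      by (field; lra).
    assert (0 < ln (S - 1) / (S - 1)) by (apply Rdiv_lt_0_compat; lra). lra. }
  assert (second : -1 <= (E - 1) * ln ((E - 1) / E)).
  { pose proof (ln_ge_1_sub_inv ((E - 1) / E) ltac:(apply Rdiv_lt_0_compat; lra)) as h.
    replace (1 - / ((E - 1) / E)) with (-1 / (E - 1)) in h by (field; lra).
    apply (Rmult_le_compat_l (E - 1)) in h; [|lra].
    replace ((E - 1) * (-1 / (E - 1))) with (-1) in h by (field; lra). exact h. }
  assert (third : 0 < (E * S - E - S) / (S * (S - 1))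
                      * - ln ((E * S - E - S) / ((S - 1) * E))).
  { apply Rmult_lt_0_compat; [apply Rdiv_lt_0_compat; nra|].
    assert (ln ((E * S - E - S) / ((S - 1) * E)) < 0); [|lra].
    rewrite <- ln_1. apply ln_increasing; [apply Rdiv_lt_0_compat; nra|].
    apply (Rmult_lt_reg_r ((S - 1) * E)); [nra|].
    unfold Rdiv. rewrite Rmult_assoc, Rinv_l by nra. nra. }
  lra.
Qed.

(* For r >= (S+1)/2 the derivative is positive:  by the logarithm bounds,
   Df S r > 1/((S-1) r) - 1/(2 r (r-1)) >= 0. *)
Lemma Df_pos_large (r : R) : (S + 1) / 2 <= r -> 0 < Df S r.
Proof.
  intros hr. pose proof (last_arg_pos r ltac:(lra)) as ht.
  assert (eA : ln (r - 1) - ln r = - ln ((r - 1 + 1) / (r - 1))).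
  { replace (r - 1 + 1) with r by ring. rewrite ln_div by lra. ring. }
  assert (eB : ln (S - 1) + ln r - ln (r * S - r - S)
               = ln ((S - 1) * r / (r * S - r - S))).
  { rewrite ln_div, ln_mult by nra. ring. }
  pose proof (ln_succ_ratio_upper (r - 1) ltac:(lra)) as hA.
  pose proof (ln_ge_1_sub_inv ((S - 1) * r / (r * S - r - S))
                ltac:(apply Rdiv_lt_0_compat; nra)) as hB.
  replace (1 - / ((S - 1) * r / (r * S - r - S))) with (S / ((S - 1) * r)) in hB
    by (field; nra).
  apply (Rmult_le_compat_r (/ S)) in hB; [|apply Rlt_le, Rinv_0_lt_compat; lra].
  assert (gap : 0 <= 1 / ((S - 1) * r) - 1 / (2 * r * (r - 1))).
  { replace (1 / ((S - 1) * r) - 1 / (2 * r * (r - 1)))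
      with ((2 * r - 1 - S) / (2 * r * (r - 1) * (S - 1))) by (field; nra).
    apply Rdiv_le_0_compat; nra. }
  assert (e1 : (2 * (r - 1) + 1) / (2 * (r - 1) * (r - 1 + 1))
               = 1 / r + 1 / (2 * r * (r - 1))) by (field; lra).
  assert (e2 : S / ((S - 1) * r) * / S = 1 / ((S - 1) * r)) by (field; nra).
  unfold Df. rewrite eA. unfold Rdiv at 3. rewrite eB. lra.
Qed.

(* On (3/2, (S+1)/2) the second derivative is positive: its numerator
   -r^2 + S r - S is concave in r and positive at both ends. *)
Lemma Df_increasing (a b : R) : 3 / 2 < a -> a < b -> b < (S + 1) / 2 ->
  Df S a < Df S b.
Proof.
  intros ha hab hb.
  assert (pos : forall x, a <= x <= b -> 0 < DDf S x).
  { intros x hx. pose proof (last_arg_pos x ltac:(lra)). unfold DDf.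
    apply Rdiv_lt_0_compat; [|repeat apply Rmult_lt_0_compat; lra].
    assert (0 < (x - 3 / 2) * ((S + 1) / 2 - x)) by (apply Rmult_lt_0_compat; lra).
    nra. }
  apply (incr_of_pos_deriv (Df S) (DDf S)); [lra| | |].
  - intros x hx. apply Df_deriv. lra.
  - intros x hx. apply Rlt_le, pos. exact hx.
  - intros x hx. apply pos. lra.
Qed.

Lemma Df_stays_pos (c z : R) : 3 / 2 < c -> 0 < Df S c -> c <= z -> 0 < Df S z.
Proof.
  intros hc hDc hz.
  destruct (Rle_or_lt ((S + 1) / 2) z) as [h|h]; [apply Df_pos_large; lra|].
  destruct (Req_dec c z) as [<-|hne]; [exact hDc|].
  pose proof (Df_increasing c z hc ltac:(lra) h). lra.
Qed.

(* The key monotonicity property: if Lf S x >= 0 for some x > 2 then,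
   because Lf S 2 < 0, the mean value theorem yields a point c in [2, x] with
   Df S c > 0, so Df S > 0 on [c, oo) and Lf S increases strictly from x on. *)
Lemma Lf_increasing_after_nonneg (x y : R) : 2 < x -> x < y -> 0 <= Lf S x ->
  Lf S x < Lf S y.
Proof.
  intros hx hxy hLx.
  destruct (mvt_closed (Lf S) (Df S) 2 x) as [c [hc e]]; [lra| |].
  { intros z hz. apply Lf_deriv. lra. }
  pose proof Lf_at_2_neg.
  assert (hDc : 0 < Df S c).
  { destruct (Rlt_or_le 0 (Df S c)) as [h|h]; [exact h|]. nra. }
  apply (incr_of_pos_deriv (Lf S) (Df S)); [lra| | |].
  - intros z hz. apply Lf_deriv. lra.
  - intros z hz. apply Rlt_le, (Df_stays_pos c); lra.
  - intros z hz. apply (Df_stays_pos c); lra.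
Qed.

Definition g (x : R) : R :=
  2 * (x - 1) * (x - 1) / (2 * x - 1) - (2 * x - 3) / (2 * (x - 1)).

(* At r = S the regrouped form and the bounds on ln(1 + 1/x) (with x = S - 1
   and x = S - 2) give (S-1) Lf S S < ln(S(S-1)) - g S. *)
Lemma Lf_at_S_lt : (S - 1) * Lf S S < ln (S * (S - 1)) - g S.
Proof.
  rewrite Lf_regrouped by lra.
  replace ((S * S - S - S) / (S * (S - 1))) with ((S - 2) / (S - 1)) by (field; lra).
  replace ((S * S - S - S) / ((S - 1) * S)) with ((S - 2) / (S - 1)) by (field; lra).
  assert (eA : ln ((S - 1) / S) = - ln ((S - 1 + 1) / (S - 1))).
  { replace (S - 1 + 1) with S by ring.
    rewrite !ln_div by lra. ring. }
  assert (eB : ln ((S - 2) / (S - 1)) = - ln ((S - 2 + 1) / (S - 2))).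
  { replace (S - 2 + 1) with (S - 1) by ring.
    rewrite !ln_div by lra. ring. }
  rewrite eA, eB, ln_mult by lra.
  pose proof (ln_succ_ratio_lower (S - 1) ltac:(lra)) as hA.
  pose proof (ln_succ_ratio_upper (S - 2) ltac:(lra)) as hB.
  set (A := ln ((S - 1 + 1) / (S - 1))) in *.
  set (B := ln ((S - 2 + 1) / (S - 2))) in *.
  apply (Rmult_lt_compat_l ((S - 1) * (S - 1))) in hA; [|nra].
  apply (Rmult_lt_compat_l (S - 2)) in hB; [|lra].
  replace ((S - 1) * (S - 1) * (2 / (2 * (S - 1) + 1)))
    with (2 * (S - 1) * (S - 1) / (2 * S - 1)) in hA by (field; lra).
  replace ((S - 2) * ((2 * (S - 2) + 1) / (2 * (S - 2) * (S - 2 + 1))))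
    with ((2 * S - 3) / (2 * (S - 1))) in hB by (field; lra).
  unfold g.
  replace ((S - 1) * ((ln (S - 1) + ln S) / (S - 1) + (S - 1) * - A
             - (S - 2) / (S - 1) * - B))
    with (ln (S - 1) + ln S - (S - 1) * (S - 1) * A + (S - 2) * B) by (field; lra).
  lra.
Qed.

End LfAnalysis.

(* Passing from x to x + 1, ln(x(x-1)) grows by ln((x+1)/(x-1)) <= 2/(x-1)
   <= 2/5, while g grows by 1 - 1/(4x^2-1) - 1/(2x(x-1)) >= 4/5. *)
Lemma ln_lt_g_step (x : R) : 6 <= x -> ln (x * (x - 1)) < g x ->
  ln ((x + 1) * (x + 1 - 1)) < g (x + 1).
Proof.
  intros hx IH.
  replace ((x + 1) * (x + 1 - 1)) with (x * (x - 1) * ((x + 1) / (x - 1)))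
    by (field; lra).
  rewrite ln_mult by (try apply Rdiv_lt_0_compat; nra).
  pose proof (ln_le_sub1 ((x + 1) / (x - 1)) ltac:(apply Rdiv_lt_0_compat; lra)) as hl.
  replace ((x + 1) / (x - 1) - 1) with (2 / (x - 1)) in hl by (field; lra).
  assert (h2 : 2 / (x - 1) <= 2 / 5).
  { apply Rmult_le_compat_l; [lra|]. apply Rinv_le_contravar; lra. }
  assert (eg : g (x + 1) - g x = 1 - / (4 * x * x - 1) - / (2 * x * (x - 1)))
    by (unfold g; field; nra).
  assert (/ (4 * x * x - 1) <= / 10) by (apply Rinv_le_contravar; nra).
  assert (/ (2 * x * (x - 1)) <= / 10) by (apply Rinv_le_contravar; nra).
  lra.
Qed.

(* For every integer s >= 6, ln(s(s-1)) < g s; the base case uses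
   ln 30 < 5 ln 2 < 85/24 < 50/11 - 9/10 = g 6. *)
Lemma ln_lt_g_nat (s : nat) : (6 <= s)%nat -> ln (INR s * (INR s - 1)) < g (INR s).
Proof.
  intros h6. induction h6 as [|s h6 IH].
  - replace (INR 6) with 6 by (simpl; ring).
    assert (h30 : ln (6 * (6 - 1)) < ln (2 ^ 5))
      by (apply ln_increasing; simpl; lra).
    rewrite ln_pow in h30 by lra. pose proof ln2_lt.
    assert (e6 : g 6 = 50 / 11 - 9 / 10) by (unfold g; field).
    simpl in h30. lra.
  - rewrite S_INR. apply ln_lt_g_step; [|exact IH].
    replace 6 with (INR 6) by (simpl; ring). apply le_INR. exact h6.
Qed.

Theorem lemma6p2 (s : nat) (hs : (5 <= s)%nat) :
  exists rho : R,
    2 < rho /\ L rho s = 0 /\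
    (forall r : R, 2 < r -> L r s = 0 -> r = rho) /\
    (forall r : R, 2 <= r < rho -> L r s < 0) /\
    (forall r : R, rho < r -> 0 < L r s) /\
    ((6 <= s)%nat -> INR s < rho).
Proof.
  set (S := INR s).
  assert (hS : 5 <= S) by (replace 5 with (INR 5) by (simpl; ring); apply le_INR, hs).
  assert (hE : 2 < exp (S - 1)) by (pose proof (exp_ineq1_le (S - 1)); lra).
  destruct (unique_sign_change (Lf S) 2 (exp (S - 1))) as
      (rho & hr2 & hzero & huniq & hneg & hpos).
  - exact hE.
  - intros x hx. apply (deriv_continuity _ _ (Df S x)), Lf_deriv; lra.
  - apply Lf_at_2_neg, hS.
  - apply Lf_large_pos, hS.
  - intros x y hx hxy. apply Lf_increasing_after_nonneg; lra.
  - exists rho. repeat split; try assumption.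
    intros h6.
    (* rho > S because Lf S S < 0 and Lf S is positive beyond rho. *)
    pose proof (Lf_at_S_lt S hS) as hbound. pose proof (ln_lt_g_nat s h6) as hg.
    fold S in hg.
    assert (hLS : Lf S S < 0) by nra.
    destruct (Rtotal_order S rho) as [h|[h|h]]; [exact h| |].
    + rewrite <- h in hzero. lra.
    + pose proof (hpos S h). lra.
Qed.
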